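(* Let $b\ge 2$ be an integer, let $A_b=\{1+(b-1)r : r\in\mathbb{N}\}$, and let $\mathrm{fact}_b:A_b\to A_b$ be defined by $\mathrm{fact}_b(1+(b-1)r)=\prod_{k=1}^{r}(1+(b-1)k)$ for all $r\in\mathbb{N}$ (the empty product being $1$). Then for every $n\in A_b$, \[1\le \frac{\mathrm{fact}_b(n)}{e^{\frac{1}{b-1}}\left(\frac{n}{e}\right)^{\frac{n}{b-1}}}\le n.\] *)

From Stdlib Require Import Reals.
Open Scope R_scope.

Fixpoint factb (b r : nat) : nat :=
  match r with
  | O => 1%nat
  | S r' => (factb b r' * (1 + (b - 1) * S r'))%nat
  end.

From Stdlib Require Import Reals Lra Lia.
Open Scope R_scope.

(* With c = b - 1 and N = 1 + c r, the denominator is exp G(N) for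
   G(x) = (x ln x - x + 1) / c.  Passing from r to r + 1 multiplies the
   product by N + c, i.e. adds ln (N + c) to its logarithm, whereas G grows by
   an amount squeezed between ln N and ln (N + c), because of the tangent-line
   bound x (ln y - ln x) <= y - x.  By induction,
   G(N) <= ln fact_b(N) <= ln N + G(N), which exponentiates to the claim. *)

Lemma ln_le_sub_1 x : 0 < x -> ln x <= x - 1.
Proof.
  intros hx. pose proof (exp_ineq1_le (ln x)) as h.
  rewrite exp_ln in h by exact hx. lra.
Qed.

Lemma ln_sub_mul_le x y : 0 < x -> 0 < y -> x * (ln y - ln x) <= y - x.
Proof.
  intros hx hy.
  assert (hq : ln (y / x) = ln y - ln x).
  { unfold Rdiv. rewrite ln_mult, ln_Rinv by (auto using Rinv_0_lt_compat). ring. }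
  rewrite <- hq.
  replace (y - x) with (x * (y / x - 1)) by (field; lra).
  apply Rmult_le_compat_l; [lra |].
  apply ln_le_sub_1, Rdiv_lt_0_compat; assumption.
Qed.

Lemma exp_le_compat x y : x <= y -> exp x <= exp y.
Proof.
  intros [hlt | ->]; [left; exact (exp_increasing _ _ hlt) | right; reflexivity].
Qed.

Fixpoint Rfactb (c : R) (r : nat) : R :=
  match r with
  | O => 1
  | S r' => Rfactb c r' * (1 + c * INR (S r'))
  end.

Lemma INR_factb b r : INR (factb b r) = Rfactb (INR (b - 1)) r.
Proof.
  induction r as [| r IH]; [reflexivity |].
  cbn [factb Rfactb]. rewrite mult_INR, plus_INR, mult_INR, IH. reflexivity.
Qed.

Definition stirling_exponent (c x : R) : R := (x * ln x - x + 1) / c.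

Section StirlingBounds.

Variable c : R.
Hypothesis c_pos : 0 < c.

Let G := stirling_exponent c.

Lemma stirling_exponent_increment_le x : 0 < x -> G (x + c) - G x <= ln (x + c).
Proof.
  intros hx.
  pose proof (ln_sub_mul_le x (x + c) hx ltac:(lra)) as hle.
  replace (G (x + c) - G x)
    with (ln (x + c) - (c - x * (ln (x + c) - ln x)) * / c)
    by (unfold G, stirling_exponent; field; lra).
  assert (0 <= (c - x * (ln (x + c) - ln x)) * / c).
  { apply Rmult_le_pos; [lra | left; apply Rinv_0_lt_compat; exact c_pos]. }
  lra.
Qed.

Lemma stirling_exponent_increment_ge x : 0 < x -> ln x <= G (x + c) - G x.
Proof.
  intros hx.
  pose proof (ln_sub_mul_le (x + c) x ltac:(lra) hx) as hle.
  replace (G (x + c) - G x)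
    with (ln x + ((x + c) * (ln (x + c) - ln x) - c) * / c)
    by (unfold G, stirling_exponent; field; lra).
  assert (0 <= ((x + c) * (ln (x + c) - ln x) - c) * / c).
  { apply Rmult_le_pos; [lra | left; apply Rinv_0_lt_compat; exact c_pos]. }
  lra.
Qed.

Lemma one_add_mul_INR_pos r : 0 < 1 + c * INR r.
Proof. pose proof (Rmult_le_pos c _ (Rlt_le _ _ c_pos) (pos_INR r)). lra. Qed.

Lemma Rfactb_pos r : 0 < Rfactb c r.
Proof.
  induction r as [| r IH]; cbn [Rfactb]; [lra |].
  exact (Rmult_lt_0_compat _ _ IH (one_add_mul_INR_pos (S r))).
Qed.

Lemma ln_Rfactb_bounds r :
  G (1 + c * INR r) <= ln (Rfactb c r) <= ln (1 + c * INR r) + G (1 + c * INR r).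
Proof.
  induction r as [| r [IHlo IHhi]].
  { cbn [Rfactb INR]. rewrite Rmult_0_r, Rplus_0_r, ln_1.
    unfold G, stirling_exponent. rewrite ln_1. unfold Rdiv. lra. }
  set (N := 1 + c * INR r) in *.
  assert (hN : 0 < N) by apply one_add_mul_INR_pos.
  assert (hSN : 1 + c * INR (S r) = N + c) by (rewrite S_INR; unfold N; ring).
  cbn [Rfactb]. rewrite hSN, ln_mult by (auto using Rfactb_pos; lra).
  pose proof (stirling_exponent_increment_le N hN).
  pose proof (stirling_exponent_increment_ge N hN).
  lra.
Qed.

Lemma Rfactb_stirling_ratio_bounds r :
  1 <= Rfactb c r / exp (G (1 + c * INR r)) <= 1 + c * INR r.
Proof.
  set (N := 1 + c * INR r).
  assert (hN : 0 < N) by apply one_add_mul_INR_pos.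
  destruct (ln_Rfactb_bounds r) as [hlo hhi]. fold N in hlo, hhi.
  replace (Rfactb c r / exp (G N)) with (exp (ln (Rfactb c r) - G N))
    by (unfold Rminus, Rdiv; rewrite exp_plus, exp_Ropp, exp_ln by apply Rfactb_pos;
        reflexivity).
  split.
  - pose proof (exp_ineq1_le (ln (Rfactb c r) - G N)). lra.
  - apply Rle_trans with (exp (ln N)); [apply exp_le_compat; lra | rewrite exp_ln; lra].
Qed.

Lemma stirling_denominator x : 0 < x ->
  exp (1 / c) * Rpower (x / exp 1) (x / c) = exp (G x).
Proof.
  intros hx. unfold Rpower, G, stirling_exponent. rewrite <- exp_plus. f_equal.
  unfold Rdiv at 3. rewrite ln_mult, ln_Rinv, ln_exp
    by (auto using Rinv_0_lt_compat, exp_pos).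
  field. lra.
Qed.

End StirlingBounds.

Theorem mainTheorem1 (b n r : nat) (hb : (2 <= b)%nat)
  (hn : n = (1 + (b - 1) * r)%nat) :
  1 <= INR (factb b r) /
         (exp (1 / (INR b - 1)) * Rpower (INR n / exp 1) (INR n / (INR b - 1)))
  <= INR n.
Proof.
  assert (hc : INR (b - 1) = INR b - 1) by (rewrite minus_INR by lia; reflexivity).
  assert (c_pos : 0 < INR b - 1) by (apply le_INR in hb; simpl in hb; lra).
  assert (hnN : INR n = 1 + (INR b - 1) * INR r)
    by (subst n; rewrite plus_INR, mult_INR, hc; reflexivity).
  rewrite INR_factb, hc, hnN, stirling_denominator by auto using one_add_mul_INR_pos.
  exact (Rfactb_stirling_ratio_bounds _ c_pos r).
Qed.
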